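(* Let $p,q,s$ be idempotents in a unital ring $A$ with $s\perp q$. If $\operatorname{sr}(pAq)=1$, then $\operatorname{sr}(pA(q+s))=1$.
   Context: Idempotents $e,f$ are orthogonal, $e\perp f$, if $ef=fe=0$ (so $q+s$ is an idempotent). For idempotents $p,q$ in a unital ring $A$, $\operatorname{sr}(pAq)=1$ means: whenever $a\in pAq$, $x\in qAp$, $b\in pAp$ satisfy $ax+b=p$, there exist $y\in pAq$, $z\in qAp$ with $(a+by)z=p$. *)

From mathcomp Require Import all_boot all_algebra.
Set Implicit Arguments. Unset Strict Implicit. Unset Printing Implicit Defensive.
Import GRing.Theory.
Local Open Scope ring_scope.

Definition is_idem (A : pzRingType) (e : A) : Prop := e * e = e.

Definition orth (A : pzRingType) (e f : A) : Prop := e * f = 0 /\ f * e = 0.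

(* membership in the corner p A q : a = p a q (equivalently a = p x q for some x) *)
Definition in_corner (A : pzRingType) (p q a : A) : Prop := a = p * a * q.

Definition sr1 (A : pzRingType) (p q : A) : Prop :=
  forall a x b : A,
    in_corner p q a -> in_corner q p x -> in_corner p p b ->
    a * x + b = p ->
    exists y z : A, in_corner p q y /\ in_corner q p z /\ (a + b * y) * z = p.

(* Put r = q + s.  Given a x + b = p in the corners of r, the splitting
   a x = (a q)(q x) + a s x exhibits an instance of sr(pAq) with the perturbation
   a s x + b.  Its solution (y, z) also solves the original problem, with y kept
   and z corrected to z + s x y z: since y s = 0 the correction only contributes
   the missing term a s x y z. *)
From mathcomp Require Import all_boot all_algebra.
Set Implicit Arguments. Unset Strict Implicit. Unset Printing Implicit Defensive.
Local Open Scope ring_scope.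
Import GRing.Theory.

Lemma idemD_orth (A : pzRingType) (e f : A) :
  is_idem e -> is_idem f -> orth e f -> is_idem (e + f).
Proof.
rewrite /is_idem => ee ff [ef fe].
by rewrite mulrDl !mulrDr ee ff ef fe addr0 add0r.
Qed.

Section Corners.

Variables (A : pzRingType) (p q : A).
Hypotheses (idem_p : is_idem p) (idem_q : is_idem q).

Lemma corner_mull (a : A) : in_corner p q a -> p * a = a.
Proof. by move=> ha; rewrite ha !mulrA idem_p. Qed.

Lemma corner_mulr (a : A) : in_corner p q a -> a * q = a.
Proof. by move=> ha; rewrite ha -!mulrA idem_q. Qed.

Lemma in_cornerI (a : A) : p * a = a -> a * q = a -> in_corner p q a.
Proof. by rewrite /in_corner => pa aq; rewrite pa aq. Qed.

End Corners.

Lemma in_cornerD (A : pzRingType) (p q a b : A) :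
  in_corner p q a -> in_corner p q b -> in_corner p q (a + b).
Proof. by rewrite /in_corner mulrDr mulrDl => <- <-. Qed.

Lemma in_corner_mul (A : pzRingType) (p q r a x : A) :
  is_idem p -> is_idem r -> in_corner p q a -> in_corner q r x ->
  in_corner p r (a * x).
Proof.
move=> idem_p idem_r ha hx.
rewrite /in_corner mulrA (corner_mull idem_p ha) -mulrA.
by rewrite (corner_mulr idem_r hx).
Qed.

Section OrthogonalSum.

Variables (A : pzRingType) (p q s : A).
Hypotheses (idem_p : is_idem p) (idem_q : is_idem q) (idem_s : is_idem s).
Hypothesis orth_sq : orth s q.

Let idem_r : is_idem (q + s).
Proof. by apply: idemD_orth => //; case: orth_sq. Qed.

Lemma in_corner_orthDl (a : A) : in_corner p q a -> in_corner p (q + s) a.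
Proof.
move=> ha; apply: in_cornerI; first exact: corner_mull ha.
by rewrite mulrDr (corner_mulr idem_q ha) -(corner_mulr idem_q ha) -mulrA orth_sq.2 mulr0 addr0.
Qed.

Lemma in_corner_orthDr (z : A) : in_corner q p z -> in_corner (q + s) p z.
Proof.
move=> hz; apply: in_cornerI; last exact: corner_mulr hz.
by rewrite mulrDl (corner_mull idem_q hz) -(corner_mull idem_q hz) mulrA orth_sq.1 mul0r addr0.
Qed.

Lemma sr1_orthD : sr1 p q -> sr1 p (q + s).
Proof.
move=> sr_pq a x b ha hx hb hax.
have hqr : in_corner q (q + s) q.
  by rewrite /in_corner idem_q mulrDr idem_q orth_sq.2 addr0.
have rs : (q + s) * s = s by rewrite mulrDl orth_sq.2 idem_s add0r.
have ha_q : in_corner p q (a * q).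
  by apply: in_cornerI; rewrite ?mulrA ?(corner_mull idem_p ha) // -mulrA idem_q.
have hx_q : in_corner q p (q * x) by exact: in_corner_mul hqr hx.
have hb_s : in_corner p p (a * s * x + b).
  apply: in_cornerI; first by rewrite mulrDr !mulrA (corner_mull idem_p ha) (corner_mull idem_p hb).
  by rewrite mulrDl -!mulrA (corner_mulr idem_p hx) (corner_mulr idem_p hb).
have hax_q : a * q * (q * x) + (a * s * x + b) = p.
  rewrite addrA -hax; congr (_ + _).
  by rewrite mulrA -(mulrA a q q) idem_q -mulrDl -mulrDr (corner_mulr idem_r ha).
have [y [z [hy [hz yz_p]]]] := sr_pq _ _ _ ha_q hx_q hb_s hax_q.
have ys : y * s = 0 by rewrite -(corner_mulr idem_q hy) -mulrA orth_sq.2 mulr0.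
have hsxyz : in_corner (q + s) p (s * x * y * z).
  by apply: in_cornerI; rewrite ?mulrA ?rs // -mulrA (corner_mulr idem_p hz).
exists y, (z + s * x * y * z); split; [exact: in_corner_orthDl | split].
- exact: in_cornerD (in_corner_orthDr hz) hsxyz.
- rewrite -yz_p mulrDr !mulrDl -{1}(corner_mull idem_q hz) (mulrA a q).
  rewrite -!mulrA (mulrA y s) ys mul0r !mulr0 addr0.
  by rewrite !mulrA addrAC -addrA.
Qed.

End OrthogonalSum.

Theorem lemma3 (A : pzRingType) (p q s : A) :
  is_idem p -> is_idem q -> is_idem s -> orth s q ->
  sr1 p q -> sr1 p (q + s).
Proof. exact: sr1_orthD. Qed.
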